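(* Let $G=(X,b,m,c)$ be a weighted graph with $c=0$, let $p\in(1,\infty)$, let $V\subseteq X$ and $\psi,\theta\colon X\to\mathbb{R}$. A function $u\in K_{\psi,\theta}(V)$ is a solution to the obstacle problem on $V$ with obstacle $\psi$ and boundary data $\theta$ if and only if $$\mathcal{E}_{p,\overline V}(u,u)=\min\{\mathcal{E}_{p,\overline V}(v,v):v\in K_{\psi,\theta}(V)\}.$$
   Context: Weighted graph $G=(X,b,m,c)$: $X$ countably infinite; $b$ symmetric, nonnegative, zero on the diagonal, $\sum_yb(x,y)<\infty$; $m>0$; $c\ge0$; $x\sim y$ iff $b(x,y)>0$; $X$ connected. $\partial_eV=\{y\in X\setminus V:y\sim z\text{ for some }z\in V\}$, $\overline V=V\cup\partial_eV$. $a^{\langle p-1\rangle}=|a|^{p-2}a$. For $U\subseteq X$ and functions $u,w$, $\mathcal{E}_{p,U}(u,w)=\frac12\sum_{x,y\in U}b(x,y)(u(x)-u(y))^{\langle p-1\rangle}(w(x)-w(y))$ (with $c=0$), whenever the sum converges absolutely. $D^p(\overline V)=\{v\colon X\to\mathbb{R}:\sum_{x,y\in\overline V}b(x,y)|v(x)-v(y)|^p<\infty\}$. $K_{\psi,\theta}(V)=\{v\in D^p(\overline V):v\ge\psi\text{ on }V,\ v=\theta\text{ on }\partial_eV\}$. A solution to the obstacle problem on $V$ with obstacle $\psi$ and boundary data $\theta$ is $u\in K_{\psi,\theta}(V)$ with $\mathcal{E}_{p,\overline V}(u,v-u)\ge0$ for all $v\in K_{\psi,\theta}(V)$. *)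

From HB Require Import structures.
From mathcomp Require Import all_boot all_order all_algebra.
From mathcomp Require Import all_classical all_reals all_analysis.
From Stdlib Require Import Relations.
Set Implicit Arguments. Unset Strict Implicit. Unset Printing Implicit Defensive.
Import Order.TTheory GRing.Theory Num.Theory.
Local Open Scope classical_set_scope.
Local Open Scope ring_scope.

Section Defs.
Variables (R : realType) (X : countType).

Definition adj (b : X -> X -> R) (x y : X) : Prop := 0 < b x y.

(* weighted graph (X,b,m,c) with c = 0 (c does not appear) *)
Definition weighted_graph (b : X -> X -> R) (m : X -> R) : Prop :=
  infinite_set [set: X] /\
  (forall x y, b x y = b y x) /\
  (forall x y, 0 <= b x y) /\
  (forall x, b x x = 0) /\
  (forall x, (\esum_(y in [set: X]) (b x y)%:E < +oo)%E) /\
  (forall x, 0 < m x) /\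
  (forall x y, clos_refl_trans X (adj b) x y).

Definition ext_boundary (b : X -> X -> R) (V : set X) : set X :=
  [set y | ~ V y /\ exists z, V z /\ adj b y z].
Definition closure_V (b : X -> X -> R) (V : set X) : set X :=
  V `|` ext_boundary b V.

(* signed power a^{<p-1>} = |a|^{p-2} a  (= sg a * |a|^{p-1}, value 0 at 0) *)
Definition spow (p a : R) : R := Num.sg a * (`|a| `^ (p - 1)).

(* real value of an absolutely convergent sum over a countable set:
   sum of positive parts minus sum of negative parts *)
Definition rsum (T : choiceType) (D : set T) (f : T -> R) : R :=
  fine (\esum_(i in D) (Num.max (f i) 0)%:E)%E
  - fine (\esum_(i in D) (Num.max (- f i) 0)%:E)%E.

Definition Ep (b : X -> X -> R) (p : R) (U : set X) (u w : X -> R) : R :=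
  2^-1 * rsum (U `*` U)
    (fun xy : X * X => b xy.1 xy.2 * spow p (u xy.1 - u xy.2) * (w xy.1 - w xy.2)).

Definition Dp (b : X -> X -> R) (p : R) (V : set X) : set (X -> R) :=
  [set v | (\esum_(xy in closure_V b V `*` closure_V b V)
              (b xy.1 xy.2 * `|v xy.1 - v xy.2| `^ p)%:E < +oo)%E].

Definition Kset (b : X -> X -> R) (p : R) (V : set X) (psi theta : X -> R)
  : set (X -> R) :=
  [set v | Dp b p V v /\ (forall x, V x -> psi x <= v x)
           /\ (forall x, ext_boundary b V x -> v x = theta x)].

Definition obstacle_solution (b : X -> X -> R) (p : R) (V : set X)
  (psi theta : X -> R) (u : X -> R) : Prop :=
  Kset b p V psi theta u /\
  forall v, Kset b p V psi theta v ->
    0 <= Ep b p (closure_V b V) u (v \- u).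

End Defs.

(* The map a |-> |a|^p is convex with derivative p * spow p a, so summing its
   tangent inequality |a|^p + p spow(a) (d - a) <= |d|^p over the edges gives
   E(u,u) + p (E(u,v) - E(u,u)) <= E(v,v): a solution of the variational
   inequality E(u, v - u) >= 0 minimizes the energy.  Conversely, let u minimize
   the energy on the convex set K and put w_t = u + t (v - u).  The same
   inequality at w_t towards u, with linearity of E(w_t, .), gives
   t E(w_t, v - u) = E(w_t, w_t) - E(w_t, u) >= 0 for t in (0, 1].  The summands
   of E(w_t, v - u) are nondecreasing in t, so dominated convergence lets
   t -> 0+ and yields E(u, v - u) >= 0. *)

From HB Require Import structures.
From mathcomp Require Import all_boot all_order all_algebra.
From mathcomp Require Import all_classical all_reals all_analysis.
From mathcomp Require Import ring lra.
Import Order.TTheory GRing.Theory Num.Theory.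
Import numFieldNormedType.Exports.
Local Open Scope classical_set_scope.
Local Open Scope ring_scope.
Set Implicit Arguments. Unset Strict Implicit. Unset Printing Implicit Defensive.

Section SignedPower.
Variables (R : realType) (p : R).
Hypothesis p_gt1 : 1 < p.

Let p_gt0 : 0 < p. Proof. exact: lt_trans p_gt1. Qed.
Let p1_gt0 : 0 < p - 1. Proof. by rewrite subr_gt0. Qed.

Lemma spow_ge0E a : 0 <= a -> spow p a = a `^ (p - 1).
Proof.
rewrite le_eqVlt => /predU1P[<-|a_gt0]; last by rewrite /spow gtr0_sg ?mul1r ?gtr0_norm.
by rewrite /spow sgr0 mul0r powR0 ?gt_eqF.
Qed.

Lemma spowN a : spow p (- a) = - spow p a.
Proof. by rewrite /spow sgrN normrN mulNr. Qed.

Lemma spow_mul_id a : spow p a * a = `|a| `^ p.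
Proof. by rewrite /spow mulrAC -normrEsg mulr_powRB1. Qed.

Lemma norm_spow a : `|spow p a| = `|a| `^ (p - 1).
Proof.
rewrite /spow normrM normr_sg ger0_norm ?powR_ge0 //.
have [->|a_neq0] := eqVneq a 0; last by rewrite mul1r.
by rewrite normr0 powR0 ?gt_eqF // mulr0.
Qed.

Lemma norm_spowM_le a c : `|spow p a * c| <= `|a| `^ p + `|c| `^ p.
Proof.
rewrite normrM norm_spow.
have [ca|ac] := leP `|c| `|a|.
  apply: le_trans (_ : `|a| `^ p <= _); last by rewrite lerDl powR_ge0.
  by rewrite -(mulr_powRB1 _ p_gt0) // [leRHS]mulrC ler_wpM2l ?powR_ge0.
apply: le_trans (_ : `|c| `^ p <= _); last by rewrite lerDr powR_ge0.
rewrite -(mulr_powRB1 _ p_gt0) // [leLHS]mulrC ler_wpM2l //.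
by apply: ge0_ler_powR; rewrite ?nnegrE ?normr_ge0 ?(ltW p1_gt0) ?(ltW ac).
Qed.

Lemma spow_le : {homo spow p : x y / x <= y}.
Proof.
have mono_ge0 (x y : R) : 0 <= x -> x <= y -> spow p x <= spow p y.
  move=> x_ge0 xy; rewrite !spow_ge0E ?(le_trans x_ge0) //.
  by apply: ge0_ler_powR; rewrite ?nnegrE ?(ltW p1_gt0) ?(le_trans x_ge0).
move=> x y xy; have [x_ge0|x_lt0] := leP 0 x; first exact: mono_ge0.
have [y_ge0|y_lt0] := leP 0 y.
  apply: (@le_trans _ _ 0); last by rewrite spow_ge0E ?powR_ge0.
  by rewrite -(opprK x) spowN oppr_le0 spow_ge0E ?powR_ge0 // oppr_ge0 ltW.
by have := mono_ge0 (- y) (- x); rewrite !spowN lerN2 oppr_ge0 lerN2; apply => //; exact: ltW.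
Qed.

Lemma spowM_dir_le a c s t : s <= t -> spow p (a + s * c) * c <= spow p (a + t * c) * c.
Proof.
move=> st; have [c_ge0|c_lt0] := leP 0 c.
  by rewrite ler_wpM2r //; apply: spow_le; rewrite lerD2l ler_wpM2r.
have c_le0 := ltW c_lt0.
by rewrite ler_wnM2r //; apply: spow_le; rewrite lerD2l ler_wnM2r.
Qed.

(* Young's inequality |d| a^(p-1) <= |d|^p / p + a^p / q, with q = p / (p - 1)
   the conjugate exponent. *)
Let spow_tangent_pos (a d : R) : 0 < a -> a `^ p + p * spow p a * (d - a) <= `|d| `^ p.
Proof.
move=> a_gt0; rewrite spow_ge0E; last exact: ltW.
set A := a `^ (p - 1); set q := p / (p - 1).
have pq : p^-1 + q^-1 = 1 by rewrite /q invf_div; field; rewrite gt_eqF.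
have Aq : A `^ q = a `^ p by rewrite -powRrM /q mulrC divfK // gt_eqF.
have Aa : A * a = a `^ p by rewrite mulrC mulr_powRB1 // ltW.
have young := conjugate_powR (normr_ge0 d) (powR_ge0 a (p - 1)) p_gt0
  (divr_gt0 p_gt0 p1_gt0) pq.
rewrite -/A Aq /q invf_div in young.
have A_ge0 : 0 <= A by exact: powR_ge0.
have dA : d * A <= `|d| * A by rewrite ler_wpM2r ?ler_norm.
have {}young : p * (`|d| * A) <= `|d| `^ p + (p - 1) * a `^ p.
  have -> : `|d| `^ p + (p - 1) * a `^ p = p * (`|d| `^ p / p + a `^ p * ((p - 1) / p)).
    by field; rewrite gt_eqF.
  by apply: ler_wpM2l; first exact: ltW.
have -> : a `^ p + p * A * (d - a) = p * (d * A) - (p - 1) * a `^ p by rewrite -Aa; ring.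
have := ler_wpM2l (ltW p_gt0) dA; lra.
Qed.

Lemma spow_tangent a d : `|a| `^ p + p * spow p a * (d - a) <= `|d| `^ p.
Proof.
have [a_lt0|a_gt0|->] := ltgtP a 0.
- have := @spow_tangent_pos (- a) (- d); rewrite oppr_gt0 normrN spowN => /(_ a_lt0).
  by rewrite (ltr0_norm a_lt0); lra.
- by rewrite gtr0_norm //; exact: spow_tangent_pos.
- rewrite /spow sgr0 normr0 powR0 ?gt_eqF // mul0r mulr0 mul0r addr0.
  exact: powR_ge0.
Qed.

Let powR_continuous_pos (a : R) : 0 < a ->
  (fun x => x `^ (p - 1)) x @[x --> a] --> a `^ (p - 1).
Proof.
move=> a_gt0; have : derivable (fun x : R => x `^ (p - 1)) a 1.
  by apply: derivable_powR; rewrite in_itv /= a_gt0.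
by move/derivable1_diffP/differentiable_continuous.
Qed.

Lemma spow_continuous : continuous (spow p).
Proof.
have cvg_pos (a : R) : 0 < a -> spow p x @[x --> a] --> spow p a.
  move=> a_gt0; rewrite spow_ge0E; last exact: ltW.
  apply: cvg_trans (powR_continuous_pos a_gt0).
  apply: near_eq_cvg; near=> x; rewrite spow_ge0E // ltW //; near: x.
  exact: lt_nbhsr.
move=> a; have [a_lt0|a_gt0|->] := ltgtP a 0.
- have -> : spow p = (fun x => - spow p (- x)) by apply/funext => x; rewrite spowN opprK.
  apply: cvgN; apply: cvg_comp (cvg_pos _ _); last by rewrite oppr_gt0.
  exact: cvgN cvg_id.
- exact: cvg_pos.
- rewrite /continuous_at [spow p 0]spow_ge0E // powR0 ?gt_eqF //.
  apply/cvgr0Pnorm_lt => e e_gt0.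
  have d_gt0 : 0 < e `^ (p - 1)^-1 by rewrite powR_gt0.
  near=> x; rewrite norm_spow.
  have -> : e = (e `^ (p - 1)^-1) `^ (p - 1).
    by rewrite -powRrM mulVf ?gt_eqF // powRr1 // ltW.
  apply: gt0_ltr_powR; rewrite ?nnegrE ?normr_ge0 ?(ltW d_gt0) //.
Unshelve. all: by end_near.
Qed.

End SignedPower.

Section AbsolutelySummable.
Variables (R : realType) (T : choiceType).
Implicit Types (D : set T) (f g h : T -> R).

Lemma le_summable D f h : (forall i, D i -> `|f i| <= h i) ->
  (\esum_(i in D) (h i)%:E < +oo)%E -> summable D (EFin \o f).
Proof.
move=> fh; apply: le_lt_trans; apply: le_esum => i Di /=.
by rewrite lee_fin fh.
Qed.

Lemma eq_summable D f g : (forall i, D i -> f i = g i) ->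
  summable D (EFin \o f) = summable D (EFin \o g).
Proof. by move=> fg; rewrite /summable; congr (_ < _)%E; apply: eq_esum => i /fg /= ->. Qed.

Lemma ge0_esumZl D (k : R) h : 0 <= k -> (forall i, 0 <= h i) ->
  \esum_(i in D) (k * h i)%:E = (k%:E * \esum_(i in D) (h i)%:E)%E.
Proof.
move=> k_ge0 h_ge0; rewrite /esum -ereal_supZl //; last first.
  by apply/set0P; exists (\sum_(i \in set0) (h i)%:E)%E, set0 => //; exact: fsets_set0.
congr ereal_sup; apply/seteqP; split => x /=.
- move=> [F DF <-]; exists (\sum_(i \in F) (h i)%:E)%E; first by exists F.
  by rewrite ge0_mule_fsumr //; apply: eq_fsbigr => i _; rewrite EFinM.
- move=> [y [F DF <-] <-]; exists F => //.
  by rewrite ge0_mule_fsumr //; apply: eq_fsbigr => i _; rewrite EFinM.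
Qed.

Lemma summableEFinD D f g : summable D (EFin \o f) -> summable D (EFin \o g) ->
  summable D (EFin \o (fun i => f i + g i)).
Proof. exact: (@summableD _ _ D (EFin \o f) (EFin \o g)). Qed.

Lemma summableEFinB D f g : summable D (EFin \o f) -> summable D (EFin \o g) ->
  summable D (EFin \o (fun i => f i - g i)).
Proof. exact: (@summableB _ _ D (EFin \o f) (EFin \o g)). Qed.

Lemma summableEFinZl D (k : R) f : summable D (EFin \o f) ->
  summable D (EFin \o (fun i => k * f i)).
Proof.
move=> sf; apply: (@le_summable _ _ (fun i => `|k| * `|f i|)).
  by move=> i _; rewrite normrM.
by rewrite ge0_esumZl //; apply: lte_mul_pinfty.
Qed.

Let max_ge0 (x : R) : 0 <= Num.max x 0.
Proof. by rewrite le_max lexx orbT. Qed.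

Let max_subN (x : R) : Num.max x 0 - Num.max (- x) 0 = x.
Proof. by rewrite !maxr_absE !subr0 normrN; lra. Qed.

Let summable_pos D f : summable D (EFin \o f) ->
  (\esum_(i in D) (Num.max (f i) 0)%:E < +oo)%E.
Proof.
apply: le_lt_trans; apply: le_esum => i _.
by rewrite lee_fin ge_max normr_ge0 ler_norm.
Qed.

Let summable_neg D f : summable D (EFin \o f) ->
  (\esum_(i in D) (Num.max (- f i) 0)%:E < +oo)%E.
Proof. by rewrite summableN; apply: summable_pos. Qed.

Let fine_esumD D g h : (forall i, 0 <= g i) -> (forall i, 0 <= h i) ->
  (\esum_(i in D) (g i)%:E < +oo)%E -> (\esum_(i in D) (h i)%:E < +oo)%E ->
  fine (\esum_(i in D) (g i + h i)%:E) =
  fine (\esum_(i in D) (g i)%:E) + fine (\esum_(i in D) (h i)%:E).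
Proof.
move=> g_ge0 h_ge0 gfin hfin.
rewrite (@eq_esum _ _ _ _ (fun i => (g i)%:E + (h i)%:E)%E) // esumD.
- by rewrite fineD // ge0_fin_numE // esum_ge0 // => i _; rewrite lee_fin.
- by move=> i _; rewrite lee_fin.
- by move=> i _; rewrite lee_fin.
Qed.

Lemma ge0_esumD_lt D g h : (forall i, D i -> 0 <= g i) -> (forall i, D i -> 0 <= h i) ->
  (\esum_(i in D) (g i)%:E < +oo)%E -> (\esum_(i in D) (h i)%:E < +oo)%E ->
  (\esum_(i in D) (g i + h i)%:E < +oo)%E.
Proof.
move=> g_ge0 h_ge0 gfin hfin.
rewrite (@eq_esum _ _ _ _ (fun i => (g i)%:E + (h i)%:E)%E) // esumD ?lte_add_pinfty //.
Qed.

Lemma eq_rsum D f g : (forall i, D i -> f i = g i) -> rsum D f = rsum D g.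
Proof.
by move=> fg; rewrite /rsum; congr (fine _ - fine _); apply: eq_esum => i /fg ->.
Qed.

Lemma rsum_ge0E D g : (forall i, D i -> 0 <= g i) ->
  rsum D g = fine (\esum_(i in D) (g i)%:E).
Proof.
move=> g_ge0; rewrite /rsum [X in _ - fine X]esum1 ?subr0.
  by congr fine; apply: eq_esum => i Di; rewrite max_l ?g_ge0.
by move=> i Di; rewrite max_r // oppr_le0 g_ge0.
Qed.

Lemma rsum_ge0 D g : (forall i, D i -> 0 <= g i) -> 0 <= rsum D g.
Proof.
move=> g_ge0; rewrite rsum_ge0E //; apply/fine_ge0/esum_ge0 => i Di.
by rewrite lee_fin g_ge0.
Qed.

Lemma rsumN D f : rsum D (fun i => - f i) = - rsum D f.
Proof.
by rewrite /rsum opprB; congr (fine _ - fine _); apply: eq_esum => i _; rewrite opprK.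
Qed.

Lemma rsum_decomp D f g h : (forall i, 0 <= g i) -> (forall i, 0 <= h i) ->
  (\esum_(i in D) (g i)%:E < +oo)%E -> (\esum_(i in D) (h i)%:E < +oo)%E ->
  (forall i, D i -> f i = g i - h i) ->
  rsum D f = fine (\esum_(i in D) (g i)%:E) - fine (\esum_(i in D) (h i)%:E).
Proof.
move=> g_ge0 h_ge0 gfin hfin fgh.
have pos_fin : (\esum_(i in D) (Num.max (f i) 0)%:E < +oo)%E.
  apply: le_lt_trans gfin; apply: le_esum => i Di.
  by rewrite lee_fin ge_max g_ge0 fgh // lerBlDr lerDl h_ge0.
have neg_fin : (\esum_(i in D) (Num.max (- f i) 0)%:E < +oo)%E.
  apply: le_lt_trans hfin; apply: le_esum => i Di.
  by rewrite lee_fin ge_max h_ge0 fgh // opprB lerBlDr lerDl g_ge0.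
have E : fine (\esum_(i in D) (Num.max (f i) 0 + h i)%:E) =
         fine (\esum_(i in D) (Num.max (- f i) 0 + g i)%:E).
  congr fine; apply: eq_esum => i Di; congr EFin.
  by rewrite fgh //; have := max_subN (g i - h i); lra.
rewrite !fine_esumD // in E.
by rewrite /rsum; lra.
Qed.

Lemma rsumD D f g : summable D (EFin \o f) -> summable D (EFin \o g) ->
  rsum D (fun i => f i + g i) = rsum D f + rsum D g.
Proof.
move=> sf sg.
rewrite (@rsum_decomp _ _ (fun i => Num.max (f i) 0 + Num.max (g i) 0)
                          (fun i => Num.max (- f i) 0 + Num.max (- g i) 0)).
- by rewrite !fine_esumD ?summable_neg ?summable_pos // /rsum opprD addrACA.
- by move=> i; rewrite addr_ge0.
- by move=> i; rewrite addr_ge0.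
- by apply: ge0_esumD_lt => *; rewrite ?max_ge0 ?summable_pos.
- by apply: ge0_esumD_lt => *; rewrite ?max_ge0 ?summable_neg.
- by move=> i _; have := max_subN (f i); have := max_subN (g i); lra.
Qed.

Lemma rsumB D f g : summable D (EFin \o f) -> summable D (EFin \o g) ->
  rsum D (fun i => f i - g i) = rsum D f - rsum D g.
Proof.
move=> sf sg; have sNg : summable D (EFin \o (fun i => - g i)) by rewrite summableN in sg.
by rewrite rsumD // rsumN.
Qed.

Lemma rsumZl D (k : R) f : summable D (EFin \o f) ->
  rsum D (fun i => k * f i) = k * rsum D f.
Proof.
wlog k_ge0 : k / 0 <= k.
  move=> Hk sf; have [k_ge0|k_lt0] := leP 0 k; first exact: Hk.
  have -> : k * rsum D f = - (- k * rsum D f) by rewrite mulNr opprK.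
  rewrite -Hk ?oppr_ge0 ?(ltW k_lt0) // -rsumN.
  by apply: eq_rsum => i _; rewrite mulNr opprK.
move=> sf.
have pos : \esum_(i in D) (Num.max (k * f i) 0)%:E =
           (k%:E * \esum_(i in D) (Num.max (f i) 0)%:E)%E.
  by rewrite -ge0_esumZl //; apply: eq_esum => i _; rewrite maxr_pMr // mulr0.
have neg : \esum_(i in D) (Num.max (- (k * f i)) 0)%:E =
           (k%:E * \esum_(i in D) (Num.max (- f i) 0)%:E)%E.
  by rewrite -ge0_esumZl //; apply: eq_esum => i _; rewrite -mulrN maxr_pMr // mulr0.
rewrite /rsum pos neg mulrBr !fineM //.
- by rewrite ge0_fin_numE ?summable_neg // esum_ge0 // => i _; rewrite lee_fin.
- by rewrite ge0_fin_numE ?summable_pos // esum_ge0 // => i _; rewrite lee_fin.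
Qed.

Lemma ler_rsum D f g : summable D (EFin \o f) -> summable D (EFin \o g) ->
  (forall i, D i -> f i <= g i) -> rsum D f <= rsum D g.
Proof.
move=> sf sg fg; rewrite -subr_ge0 -rsumB //.
by apply: rsum_ge0 => i Di; rewrite subr_ge0 fg.
Qed.

End AbsolutelySummable.

Section DominatedConvergence.
Variables (R : realType) (T : choiceType).
Implicit Types (D : set T) (M : T -> R).

Lemma esum_split D A (h : T -> R) : fsets D A -> (forall i, D i -> 0 <= h i) ->
  \esum_(i in D) (h i)%:E =
  ((\sum_(i \in A) h i)%:E + \esum_(i in D `&` ~` A) (h i)%:E)%E.
Proof.
move=> [finA AD] h_ge0; rewrite (esumID A); last by move=> i /h_ge0; rewrite lee_fin.
rewrite (setIidr AD) esum_fset ?fsumEFin // => i /set_mem /AD /h_ge0.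
by rewrite lee_fin.
Qed.

Lemma esum_tail_lt D M (e : R) : summable D (EFin \o M) -> 0 < e ->
  exists2 A, fsets D A & (\esum_(i in D `&` ~` A) (`|M i|)%:E < e%:E)%E.
Proof.
move=> sM e_gt0; have Sfin : \esum_(i in D) (`|M i|)%:E \is a fin_num.
  by rewrite ge0_fin_numE // esum_ge0.
have [_ [A DA <-] close] := ub_ereal_sup_adherent e_gt0 Sfin.
exists A => //; move: close Sfin; rewrite -/(esum _ _) (esum_split DA) //.
have : (0 <= \esum_(i in D `&` ~` A) (`|M i|)%:E)%E by rewrite esum_ge0.
case: (\esum_(i in D `&` ~` A) _) => [t| |] //= _.
rewrite fsumEFin; last exact: DA.1.
by rewrite -EFinD !lte_fin => ? _; lra.
Qed.

Lemma rsum_dominated_cvg {U : Type} (F : set_system U) {FF : Filter F}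
    D (g : U -> T -> R) M :
  summable D (EFin \o M) ->
  (\forall t \near F, forall i, D i -> 0 <= g t i <= M i) ->
  (forall i, D i -> g t i @[t --> F] --> 0) ->
  rsum D (g t) @[t --> F] --> 0.
Proof.
move=> sM gM g_cvg0; apply/cvgr0Pnorm_lt => e e_gt0.
have [A DA tail_lt] := esum_tail_lt sM (divr_gt0 e_gt0 (ltr0n _ 2)).
have cvgA : \sum_(i \in A) g t i @[t --> F] --> 0.
  have finA := DA.1.
  under eq_cvg do rewrite fsbig_finite // big_seq.
  pose s := finmap.enum_fset (fset_set A).
  have := @cvg_big _ _ +%R 0 (fun i => i \in s) add_continuous _ F s
    (fun i t => g t i) (fun=> 0) FF.
  rewrite big1 //; apply => i; rewrite /s in_fset_set // inE => /DA.2.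
  exact: g_cvg0.
near=> t.
have gMt : forall i, D i -> 0 <= g t i <= M i by near: t.
have g_ge0 i : D i -> 0 <= g t i by move=> /gMt /andP[].
have g_le i : D i -> g t i <= M i by move=> /gMt /andP[].
have gA_lt : `|\sum_(i \in A) g t i| < e / 2.
  by near: t; apply: cvgr0_norm_lt cvgA _ _; rewrite divr_gt0.
have tail_le : (\esum_(i in D `&` ~` A) (g t i)%:E <= \esum_(i in D `&` ~` A) (`|M i|)%:E)%E.
  by apply: le_esum => i [Di _]; rewrite lee_fin (le_trans (g_le _ Di)) ?ler_norm.
have tail_ge0 : (0 <= \esum_(i in D `&` ~` A) (g t i)%:E)%E.
  by apply: esum_ge0 => i [Di _]; rewrite lee_fin g_ge0.
rewrite rsum_ge0E // (esum_split DA) //.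
move: (le_lt_trans tail_le tail_lt) tail_ge0.
case: (\esum_(i in D `&` ~` A) _) => [r| |] //=; rewrite lte_fin lee_fin => r_lt r_ge0.
by rewrite (le_lt_trans (ler_normD _ _)) // (ger0_norm r_ge0); lra.
Unshelve. all: by end_near.
Qed.

End DominatedConvergence.

Lemma norm_segment_powR_le (R : realType) (p a c t : R) : 0 <= p -> 0 <= t <= 1 ->
  `|a + t * (c - a)| `^ p <= `|a| `^ p + `|c| `^ p.
Proof.
move=> p_ge0 /andP[t_ge0 t_le1].
have le_max (m : R) : `|a| <= m -> `|c| <= m -> `|a + t * (c - a)| <= m.
  move=> am cm; have -> : a + t * (c - a) = (1 - t) * a + t * c by ring.
  apply: le_trans (ler_normD _ _) _.
  rewrite !normrM (ger0_norm t_ge0) ger0_norm ?subr_ge0 //; nra.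
have powR_le (x y : R) : `|x| <= y -> `|x| `^ p <= y `^ p.
  by move=> xy; apply: ge0_ler_powR; rewrite ?nnegrE ?normr_ge0 // (le_trans _ xy).
have [ac|ca] := leP `|a| `|c|.
  by apply: le_trans (powR_le _ _ (le_max _ ac (lexx _))) _; rewrite lerDr powR_ge0.
apply: le_trans (powR_le _ _ (le_max _ (lexx _) (ltW ca))) _.
by rewrite lerDl powR_ge0.
Qed.

Definition segment (X : Type) (R : realType) (u v : X -> R) (t : R) : X -> R :=
  fun x => u x + t * (v x - u x).

Lemma segment0 (X : Type) (R : realType) (u v : X -> R) : segment u v 0 = u.
Proof. by apply/funext => x; rewrite /segment mul0r addr0. Qed.

Section Energy.
Variables (R : realType) (X : countType) (b : X -> X -> R) (p : R) (V : set X).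
Hypotheses (p_gt1 : 1 < p) (b_ge0 : forall x y, 0 <= b x y).

Local Notation U := (closure_V b V).
Local Notation Dp := (Dp b p V).

Definition Ep_density (u w : X -> R) (xy : X * X) : R :=
  b xy.1 xy.2 * spow p (u xy.1 - u xy.2) * (w xy.1 - w xy.2).

Lemma EpE (W : set X) u w : Ep b p W u w = 2^-1 * rsum (W `*` W) (Ep_density u w).
Proof. by []. Qed.

Let Dp_sum_lt u w : Dp u -> Dp w ->
  (\esum_(xy in U `*` U) (b xy.1 xy.2 * `|u xy.1 - u xy.2| `^ p
                          + b xy.1 xy.2 * `|w xy.1 - w xy.2| `^ p)%:E < +oo)%E.
Proof.
by apply: ge0_esumD_lt => xy _; rewrite mulr_ge0 ?powR_ge0.
Qed.

Lemma summable_Ep_density u w : Dp u -> Dp w -> summable (U `*` U) (EFin \o Ep_density u w).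
Proof.
move=> Du Dw; apply: le_summable (Dp_sum_lt Du Dw) => xy _.
rewrite -mulrDr /Ep_density -mulrA normrM ger0_norm //.
by rewrite ler_wpM2l // norm_spowM_le.
Qed.

Lemma Dp_segment u v t : Dp u -> Dp v -> 0 <= t <= 1 -> Dp (segment u v t).
Proof.
move=> Du Dv t01; apply: le_lt_trans (Dp_sum_lt Du Dv); apply: le_esum => xy _.
rewrite lee_fin -mulrDr; apply: ler_wpM2l => //; rewrite /segment.
have -> : u xy.1 + t * (v xy.1 - u xy.1) - (u xy.2 + t * (v xy.2 - u xy.2)) =
  (u xy.1 - u xy.2) + t * ((v xy.1 - v xy.2) - (u xy.1 - u xy.2)) by ring.
by apply: norm_segment_powR_le t01; rewrite (le_trans ler01) // ltW.
Qed.

Lemma Kset_segment psi theta u v t : Kset b p V psi theta u -> Kset b p V psi theta v ->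
  0 <= t <= 1 -> Kset b p V psi theta (segment u v t).
Proof.
move=> [Du [psi_u theta_u]] [Dv [psi_v theta_v]] t01; split; [|split].
- exact: Dp_segment.
- move=> x Vx; have := psi_u x Vx; have := psi_v x Vx; case/andP: t01; rewrite /segment; nra.
- by move=> x Bx; rewrite /segment theta_u // theta_v // subrr mulr0 addr0.
Qed.

Lemma Ep_densityB u y z xy :
  Ep_density u (y \- z) xy = Ep_density u y xy - Ep_density u z xy.
Proof. by rewrite /Ep_density /=; ring. Qed.

Lemma summable_Ep_densityB u y z : Dp u -> Dp y -> Dp z ->
  summable (U `*` U) (EFin \o Ep_density u (y \- z)).
Proof.
move=> Du Dy Dz; rewrite (eq_summable (g := fun xy => Ep_density u y xy - Ep_density u z xy)).
  by apply: summableEFinB; exact: summable_Ep_density.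
by move=> xy _; exact: Ep_densityB.
Qed.

Lemma EpBr u y z : Dp u -> Dp y -> Dp z ->
  Ep b p U u (y \- z) = Ep b p U u y - Ep b p U u z.
Proof.
move=> Du Dy Dz; rewrite !EpE -mulrBr -rsumB ?summable_Ep_density //.
by congr (_ * _); apply: eq_rsum => xy _; exact: Ep_densityB.
Qed.

Lemma Ep_segmentr w u v t : Dp w -> Dp u -> Dp v ->
  Ep b p U w (segment u v t) = Ep b p U w u + t * (Ep b p U w v - Ep b p U w u).
Proof.
move=> Dw Du Dv; rewrite -EpBr // !EpE mulrCA -mulrDr; congr (_ * _).
rewrite -rsumZl ?summable_Ep_densityB //.
rewrite -rsumD ?summableEFinZl ?summable_Ep_densityB ?summable_Ep_density //.
by apply: eq_rsum => xy _; rewrite /Ep_density /segment /=; ring.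
Qed.

Lemma Ep_tangent u w : Dp u -> Dp w ->
  Ep b p U u u + p * (Ep b p U u w - Ep b p U u u) <= Ep b p U w w.
Proof.
move=> Du Dw.
have sum_le : rsum (U `*` U) (Ep_density u u) + p * (rsum (U `*` U) (Ep_density u w)
    - rsum (U `*` U) (Ep_density u u)) <= rsum (U `*` U) (Ep_density w w).
  rewrite -rsumB ?summable_Ep_density // -rsumZl ?summableEFinB ?summable_Ep_density //.
  rewrite -rsumD ?summableEFinZl ?summableEFinB ?summable_Ep_density //.
  apply: ler_rsum => [||xy _];
    rewrite ?summableEFinD ?summableEFinZl ?summableEFinB ?summable_Ep_density //.
  have := spow_tangent p_gt1 (u xy.1 - u xy.2) (w xy.1 - w xy.2).
  rewrite -!spow_mul_id // => /(ler_wpM2l (b_ge0 xy.1 xy.2)).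
  by rewrite /Ep_density; lra.
by rewrite !EpE; lra.
Qed.

Let Ep_density_segmentE u v t xy :
  Ep_density (segment u v t) (v \- u) xy = b xy.1 xy.2 *
    (spow p ((u xy.1 - u xy.2) + t * ((v \- u) xy.1 - (v \- u) xy.2))
     * ((v \- u) xy.1 - (v \- u) xy.2)).
Proof.
by rewrite /Ep_density -mulrA /segment /=; congr (_ * (spow p _ * _)); ring.
Qed.

Lemma Ep_density_segment_le u v s t xy : s <= t ->
  Ep_density (segment u v s) (v \- u) xy <= Ep_density (segment u v t) (v \- u) xy.
Proof.
by move=> st; rewrite !Ep_density_segmentE; apply: ler_wpM2l => //; exact: spowM_dir_le.
Qed.

Lemma Ep_density_segment_cvg u v xy :
  Ep_density (segment u v t) (v \- u) xy @[t --> 0] --> Ep_density u (v \- u) xy.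
Proof.
have -> : Ep_density u (v \- u) xy = Ep_density (segment u v 0) (v \- u) xy.
  by rewrite segment0.
rewrite Ep_density_segmentE; under eq_cvg do rewrite Ep_density_segmentE.
apply: cvgMl_tmp; apply: cvgMr_tmp.
apply: (cvg_comp (fun t => _ + t * _) (spow p)); last exact: spow_continuous.
by apply: cvgD; [exact: cvg_cst | apply: cvgMr_tmp; exact: cvg_id].
Qed.

Lemma Ep_segment_cvg u v : Dp u -> Dp v ->
  Ep b p U (segment u v t) (v \- u) @[t --> 0^'+] --> Ep b p U u (v \- u).
Proof.
move=> Du Dv.
pose H t := Ep_density (segment u v t) (v \- u); pose H0 := Ep_density u (v \- u).
pose g t xy := H t xy - H0 xy.
have H0E : H0 = H 0 by rewrite /H segment0.
have sH t : 0 <= t <= 1 -> summable (U `*` U) (EFin \o H t).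
  by move=> t01; apply: summable_Ep_densityB => //; exact: Dp_segment.
have sH0 : summable (U `*` U) (EFin \o H0) by exact: summable_Ep_densityB.
have g_bound : \forall t \near 0^'+, forall xy, (U `*` U) xy -> 0 <= g t xy <= g 1 xy.
  near=> t => xy _; rewrite /g subr_ge0 lerD2r H0E.
  rewrite !Ep_density_segment_le //.
  by near: t; apply: nbhs_right_le; exact: ltr01.
have g_cvg xy : (U `*` U) xy -> g t xy @[t --> 0^'+] --> 0.
  move=> _; suff : H t xy - H0 xy @[t --> 0] --> H0 xy - H0 xy.
    by rewrite subrr; exact: cvg_within_filter.
  by apply: cvgB; [exact: Ep_density_segment_cvg | exact: cvg_cst].
have g1_summable : summable (U `*` U) (EFin \o g 1).
  by apply: summableEFinB => //; apply: sH; rewrite lexx ler01.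
have sum_eq : {near 0^'+, (fun t => 2^-1 * (rsum (U `*` U) H0 + rsum (U `*` U) (g t)))
                          =1 (fun t => Ep b p U (segment u v t) (v \- u))}.
  near=> t; have t01 : 0 <= t <= 1.
    by apply/andP; split; [|near: t; apply: nbhs_right_le; exact: ltr01].
  rewrite EpE -rsumD ?summableEFinB ?sH //.
  by congr (_ * _); apply: eq_rsum => xy _; rewrite /g addrC subrK.
apply: cvg_trans (near_eq_cvg sum_eq) _.
have -> : Ep b p U u (v \- u) = 2^-1 * (rsum (U `*` U) H0 + 0) by rewrite addr0.
apply: cvgMl_tmp; apply: cvgD; first exact: cvg_cst.
exact: rsum_dominated_cvg g1_summable g_bound g_cvg.
Unshelve. all: by end_near.
Qed.

Lemma Ep_le_of_variational u v : Dp u -> Dp v ->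
  0 <= Ep b p U u (v \- u) -> Ep b p U u u <= Ep b p U v v.
Proof.
move=> Du Dv; rewrite EpBr // subr_ge0 => Euv.
apply: le_trans (Ep_tangent Du Dv); rewrite lerDl mulr_ge0 ?subr_ge0 //.
exact: le_trans ler01 (ltW p_gt1).
Qed.

Lemma variational_of_Ep_min psi theta u v :
  Kset b p V psi theta u -> Kset b p V psi theta v ->
  (forall w, Kset b p V psi theta w -> Ep b p U u u <= Ep b p U w w) ->
  0 <= Ep b p U u (v \- u).
Proof.
move=> Ku Kv u_min; have Du := Ku.1; have Dv := Kv.1.
apply: cvgr_to_ge (Ep_segment_cvg Du Dv) _; near=> t.
have t_gt0 : 0 < t by near: t; exact: nbhs_right_gt.
have t01 : 0 <= t <= 1 by rewrite (ltW t_gt0); near: t; apply: nbhs_right_le; exact: ltr01.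
have Dw := Dp_segment Du Dv t01.
have tangent := Ep_tangent Dw Du.
have w_ge := u_min _ (Kset_segment Ku Kv t01).
have seg := Ep_segmentr t Dw Du Dv.
rewrite EpBr // -(pmulr_rge0 _ t_gt0).
have p_gt0 : 0 < p by exact: lt_trans ltr01 p_gt1.
nra.
Unshelve. all: by end_near.
Qed.

End Energy.

Theorem lemma3p23 (R : realType) (X : countType) (b : X -> X -> R) (m : X -> R)
  (p : R) (V : set X) (psi theta : X -> R) (u : X -> R) :
  weighted_graph b m -> 1 < p -> Kset b p V psi theta u ->
  (obstacle_solution b p V psi theta u <->
   forall v, Kset b p V psi theta v ->
     Ep b p (closure_V b V) u u <= Ep b p (closure_V b V) v v).
Proof.
move=> [_ [_ [b_ge0 _]]] p_gt1 Ku; split.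
- by move=> [_ variational] v Kv; apply: Ep_le_of_variational Ku.1 Kv.1 (variational v Kv).
- by move=> u_min; split => // v Kv; exact: variational_of_Ep_min Ku Kv u_min.
Qed.
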